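(* Let $N^{[0]}$ be a $C^0$ net on the grid $T^{[0]}$ with lines $s^{[0]}_i=t^{[0]}_i=i$, $i\in\mathbb{Z}$, having the BMSDD property with constant $L$, and let $N^{[k]}$ on grids $T^{[k]}$ (lines $s^{[k]}_i$, $t^{[k]}_j$), $k\ge0$, be generated by the corner cutting algorithm for nets of functions (described in the context) with weights $\boldsymbol{\gamma}^{[s],[k]},\boldsymbol{\gamma}^{[t],[k]}\in\mathscr{W}$. Then for every $k\ge0$, $$\|\mathcal{C}(N^{[k+1]})-\mathcal{C}(N^{[k]})\|_\infty\le 3^{k+1}L\,\frac{h_s^{[k+1]}h_t^{[k+1]}}{4},$$ where $h_s^{[k+1]}=\sup_{i\in\mathbb{Z}}(s^{[k+1]}_{i+1}-s^{[k+1]}_i)$, $h_t^{[k+1]}=\sup_{i\in\mathbb{Z}}(t^{[k+1]}_{i+1}-t^{[k+1]}_i)$, and the norm on the left is the supremum over $\mathbb{R}^2$.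
   Context: $\mathscr{W}$ is the set of pairs $(\boldsymbol{\alpha},\boldsymbol{\beta})$ of real bi-infinite sequences with $\inf_i\min\{\alpha_i,1-\beta_i,\beta_i-\alpha_i\}>0$. For strictly increasing bi-infinite real sequences $(s_i)$, $(t_j)$, unbounded above and below, the grid is $T=\bigcup_i\{s_i\}\times\mathbb{R}\cup\bigcup_j\mathbb{R}\times\{t_j\}$. A net $N(T)$ is a function on $T$ with values in $\mathbb{R}^m$; it is $C^0$ if all u-functions $s\mapsto N(s,t_j)$, $t\mapsto N(s_i,t)$ are continuous. The piecewise Coons patch $\mathcal{C}(N)$ is defined on each rectangle $[s_i,s_{i+1}]\times[t_j,t_{j+1}]$, with $h_1=s_{i+1}-s_i$, $h_2=t_{j+1}-t_j$, by $\mathcal{C}(N)(s,t)=\frac{s_{i+1}-s}{h_1}N(s_i,t)+\frac{s-s_i}{h_1}N(s_{i+1},t)+\frac{t_{j+1}-t}{h_2}N(s,t_j)+\frac{t-t_j}{h_2}N(s,t_{j+1})-B(s,t)$, with $B(s,t)=\frac{s_{i+1}-s}{h_1}\big(\frac{t_{j+1}-t}{h_2}N(s_i,t_j)+\frac{t-t_j}{h_2}N(s_i,t_{j+1})\big)+\frac{s-s_i}{h_1}\big(\frac{t_{j+1}-t}{h_2}N(s_{i+1},t_j)+\frac{t-t_j}{h_2}N(s_{i+1},t_{j+1})\big)$. Algorithm: given $N^{[k]}$ on grid $T^{[k]}$ with lines $s^{[k]}_i,t^{[k]}_j$, set $s^{[k+1]}_{2i}=(1-\alpha^{[s],[k]}_i)s^{[k]}_i+\alpha^{[s],[k]}_is^{[k]}_{i+1}$,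 $s^{[k+1]}_{2i+1}=(1-\beta^{[s],[k]}_i)s^{[k]}_i+\beta^{[s],[k]}_is^{[k]}_{i+1}$, and analogously for $t^{[k+1]}$ with $\boldsymbol{\gamma}^{[t],[k]}=(\boldsymbol{\alpha}^{[t],[k]},\boldsymbol{\beta}^{[t],[k]})$; $T^{[k+1]}$ is the grid with these lines and $N^{[k+1]}=\mathcal{C}(N^{[k]})|_{T^{[k+1]}}$. For $\sigma_1\ne\sigma_2$, $\tau_1\ne\tau_2$, $[\sigma_1,\sigma_2;\tau_1,\tau_2]N=\frac{N(\sigma_1,\tau_1)+N(\sigma_2,\tau_2)-N(\sigma_2,\tau_1)-N(\sigma_1,\tau_2)}{(\sigma_1-\sigma_2)(\tau_1-\tau_2)}$; a net on a grid has the BMSDD property with constant $L$ if $\|[\sigma_1,\sigma_2;\tau_1,\tau_2]N\|_\infty\le L$ whenever all four points $(\sigma_i,\tau_j)$ lie on the grid. *)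

From HB Require Import structures.
From mathcomp Require Import all_boot all_order all_algebra.
From mathcomp Require Import all_classical all_reals all_analysis.
Set Implicit Arguments. Unset Strict Implicit. Unset Printing Implicit Defensive.
Import Order.TTheory GRing.Theory Num.Theory.
Import numFieldNormedType.Exports.
Local Open Scope classical_set_scope.
Local Open Scope ring_scope.

(* Values in R^m are row vectors 'rV[R]_m; the norm `|v| on 'rV[R]_m is the
   max (infinity) norm (mx_norm). Indices i in Z are of type int. A net on a
   grid is modelled as a total function R -> R -> 'rV[R]_m of which only the
   values on the grid are ever used. *)

Definition inW (R : realType) (alpha beta : int -> R) : Prop :=
  exists eps : R, 0 < eps /\
    forall i : int, eps <= alpha i /\ eps <= 1 - beta i /\ eps <= beta i - alpha i.

Definition on_grid (R : realType) (s t : int -> R) (x y : R) : Prop :=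
  (exists i : int, x = s i) \/ (exists j : int, y = t j).

Definition C0_net (R : realType) (m : nat) (s t : int -> R)
  (N : R -> R -> 'rV[R]_m) : Prop :=
  (forall j : int, continuous (fun x : R => N x (t j))) /\
  (forall i : int, continuous (fun y : R => N (s i) y)).

Definition divdiff (R : realType) (m : nat) (N : R -> R -> 'rV[R]_m)
  (s1 s2 t1 t2 : R) : 'rV[R]_m :=
  ((s1 - s2) * (t1 - t2))^-1 *: (N s1 t1 + N s2 t2 - N s2 t1 - N s1 t2).

Definition BMSDD (R : realType) (m : nat) (s t : int -> R)
  (N : R -> R -> 'rV[R]_m) (L : R) : Prop :=
  forall s1 s2 t1 t2 : R, s1 != s2 -> t1 != t2 ->
    on_grid s t s1 t1 -> on_grid s t s1 t2 ->
    on_grid s t s2 t1 -> on_grid s t s2 t2 ->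
    `|divdiff N s1 s2 t1 t2| <= L.

Definition coons_cell (R : realType) (m : nat) (s t : int -> R)
  (N : R -> R -> 'rV[R]_m) (i j : int) (x y : R) : 'rV[R]_m :=
  let h1 := s (i + 1) - s i in
  let h2 := t (j + 1) - t j in
  let B := ((s (i + 1) - x) / h1) *:
             (((t (j + 1) - y) / h2) *: N (s i) (t j)
              + ((y - t j) / h2) *: N (s i) (t (j + 1)))
         + ((x - s i) / h1) *:
             (((t (j + 1) - y) / h2) *: N (s (i + 1)) (t j)
              + ((y - t j) / h2) *: N (s (i + 1)) (t (j + 1))) in
  ((s (i + 1) - x) / h1) *: N (s i) y + ((x - s i) / h1) *: N (s (i + 1)) y
  + ((t (j + 1) - y) / h2) *: N x (t j) + ((y - t j) / h2) *: N x (t (j + 1))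
  - B.

Definition in_cell (R : realType) (s t : int -> R) (i j : int) (x y : R) : Prop :=
  s i <= x <= s (i + 1) /\ t j <= y <= t (j + 1).

Definition refine_step (R : realType) (alpha beta : int -> R)
  (s s' : int -> R) : Prop :=
  forall i : int,
    s' (2 * i) = (1 - alpha i) * s i + alpha i * s (i + 1) /\
    s' (2 * i + 1) = (1 - beta i) * s i + beta i * s (i + 1).

Definition mesh (R : realType) (s : int -> R) : R :=
  sup (range (fun i : int => s (i + 1) - s i)).

From HB Require Import structures.
From mathcomp Require Import all_boot all_order all_algebra.
From mathcomp Require Import all_classical all_reals all_analysis.
From mathcomp Require Import ring lra zify.
Import Order.TTheory GRing.Theory Num.Theory.
Import numFieldNormedType.Exports.
Local Open Scope classical_set_scope.
Local Open Scope ring_scope.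
Set Implicit Arguments. Unset Strict Implicit.

(* Bound the mixed differences of N^[k] multiplicatively on its grid,
   |N(x1,y1) + N(x2,y2) - N(x2,y1) - N(x1,y2)| <= M_k |x1 - x2| |y1 - y2|,
   with M_0 = L.  On a single cell the mixed difference of the Coons patch is
   a combination of three mixed differences of the net along grid lines, so
   there the patch obeys the bound with constant 3 M_k; mixed differences are
   additive over adjacent intervals, so the bound glues across cells to the
   whole plane.  As N^[k+1] is a restriction of C(N^[k]), M_k <= 3^k L.
   Finally C(N^[k+1]) is the Coons patch of C(N^[k]) on the finer grid, and
   the error of a Coons patch at (x, y) is a convex combination of four mixed
   differences with corner (x, y); the weights produce the factor
   (h_s / 2) (h_t / 2). *)

(* Grid lines: strictly increasing and unbounded in both directions, the
   latter expressed by the spans [s i, s (i + 1)] covering R. *)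
Record knot_seq (R : realType) (s : int -> R) : Prop := KnotSeq {
  knot_lt : forall i, s i < s (i + 1);
  knot_cover : forall x, exists i, s i <= x <= s (i + 1) }.

Definition gaps_bounded (R : realType) (s : int -> R) : Prop :=
  exists B, forall i, s (i + 1) - s i <= B.

Lemma int_even_or_odd (z : int) : exists i, z = 2 * i \/ z = 2 * i + 1.
Proof.
exists (z %/ 2)%Z; have := divz_eq z 2.
have := modz_ge0 z (isT : (2 : int) != 0); have := ltz_pmod z (isT : (0 : int) < 2).
by move: (z %% 2)%Z => r; lia.
Qed.

Section Knots.

Variables (R : realType) (s : int -> R).
Hypothesis s_lt : forall i, s i < s (i + 1).

Lemma knot_ltr : {homo s : i j / (i < j)%R}.
Proof.
move=> i j ij; have [n ->] : exists n : nat, j = i + (n.+1)%:Z.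
  by exists (absz (j - i - 1)%R); lia.
elim: n => [|n IH]; first exact: s_lt.
by apply: lt_trans IH _; have -> : i + (n.+2)%:Z = i + (n.+1)%:Z + 1 by lia.
Qed.

Lemma knot_ler : {homo s : i j / (i <= j)%R}.
Proof. by move=> i j; rewrite le_eqVlt => /predU1P [-> // | /knot_ltr/ltW]. Qed.

Lemma knot_gap_neq0 i : s (i + 1) - s i != 0.
Proof. by rewrite subr_eq0 gt_eqF. Qed.

Lemma knot_span_unique i i' x :
  s i <= x <= s (i + 1) -> s i' <= x <= s (i' + 1) ->
  [\/ i = i', i' = i + 1 /\ x = s (i + 1) | i = i' + 1 /\ x = s i].
Proof.
move=> /andP [h1 h2] /andP [h3 h4].
case: (ltgtP i i') => [lt_ii' | lt_i'i | ->]; last by constructor 1.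
- constructor 2; case: (ltgtP i' (i + 1)) => [|c|c]; first lia.
  + by have := knot_ltr c; lra.
  + by split => //; rewrite c in h3; lra.
- constructor 3; case: (ltgtP i (i' + 1)) => [|c|c]; first lia.
  + by have := knot_ltr c; lra.
  + by split => //; rewrite -c in h4; lra.
Qed.

Lemma knot_span_ind (P : R -> R -> Prop) :
  (forall x, exists i, s i <= x <= s (i + 1)) ->
  (forall x1 x2 x3, x1 <= x2 -> x2 <= x3 -> P x1 x2 -> P x2 x3 -> P x1 x3) ->
  (forall x1 x2, P x1 x2 -> P x2 x1) ->
  (forall i x1 x2, s i <= x1 <= s (i + 1) -> s i <= x2 <= s (i + 1) -> P x1 x2) ->
  forall x1 x2, P x1 x2.
Proof.
move=> cover trans sym span x1 x2.
wlog le12 : x1 x2 / x1 <= x2.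
  by move=> H; case: (lerP x1 x2) => [/H // | /ltW/H]; apply: sym.
have [i2 h2] := cover x2; have [i1 h1] := cover x1.
case: (ltP i2 i1) => c.
  have le_i2i1 : s (i2 + 1) <= s i1 by apply: knot_ler; lia.
  have -> : x1 = x2 by move: h1 h2 => /andP [? ?] /andP [? ?]; lra.
  exact: (span i2).
have [n En] : exists n : nat, i2 = i1 + n%:Z by exists (absz (i2 - i1)%R); lia.
rewrite En {c En} in h2; elim: n i1 x1 le12 h1 h2 => [|n IH] i1 x1 le12 h1 h2.
  by rewrite addr0 in h2; apply: (span i1).
have z1 : s i1 <= s (i1 + 1) by apply/ltW.
have z2 : s (i1 + 1) <= x2.
  by move: h2 => /andP [h2 _]; apply: le_trans h2; apply: knot_ler; lia.
apply: (trans _ (s (i1 + 1))) => //; first by case/andP: h1.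
  by apply: (span i1) => //; rewrite z1 lexx.
apply: (IH (i1 + 1)) => //; first by rewrite lexx /= ltW.
by have -> : i1 + 1 + n%:Z = i1 + (n.+1)%:Z by lia.
Qed.

End Knots.

Lemma int_knot_seq (R : realType) : knot_seq (fun i : int => i%:~R : R).
Proof.
split=> [i | x]; first by rewrite intrD ltrDl ltr01.
by exists (Num.floor x); rewrite floor_le /= ltW // floorD1_gt.
Qed.

Lemma int_gaps_bounded (R : realType) : gaps_bounded (fun i : int => i%:~R : R).
Proof. by exists 1 => i; rewrite intrD addrAC subrr add0r. Qed.

Lemma mesh_ge (R : realType) (s : int -> R) i : gaps_bounded s -> s (i + 1) - s i <= mesh s.
Proof.
move=> [B sB]; apply: sup_upper_bound; last by exists i.
by split; [exists (s (0 + 1) - s 0), 0 | exists B => _ [p _ <-]].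
Qed.

Section Refinement.

Variables (R : realType) (a b s s' : int -> R).
Hypotheses (ab_W : inW a b) (ss' : refine_step a b s s').
Hypothesis s_knots : knot_seq s.

Let s_lt := knot_lt s_knots.

Let weights i : 0 < a i /\ a i < b i /\ b i < 1.
Proof. by case: ab_W => e [e0 /(_ i)]; lra. Qed.

Let gap_ge0 i : 0 <= s (i + 1) - s i.
Proof. by rewrite subr_ge0 ltW. Qed.

Let refine_lt i : s' i < s' (i + 1).
Proof.
have [j [-> | ->]] := int_even_or_odd i.
  have [-> ->] := ss' j; have := weights j; have := s_lt j.
  move=> ? ?; have : 0 < (b j - a j) * (s (j + 1) - s j) by apply: mulr_gt0; lra.
  lra.
have -> : 2 * j + 1 + 1 = 2 * (j + 1) by ring.
have [_ ->] := ss' j; have [-> _] := ss' (j + 1).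
have := weights j; have := weights (j + 1); have := s_lt j; have := s_lt (j + 1).
move=> ? ? ? ?.
have : 0 < (1 - b j) * (s (j + 1) - s j) by apply: mulr_gt0; lra.
have : 0 <= a (j + 1) * (s (j + 1 + 1) - s (j + 1)) by apply: mulr_ge0; lra.
lra.
Qed.

Lemma refine_gaps_bounded : gaps_bounded s -> gaps_bounded s'.
Proof.
move=> [B HB]; exists (B + B) => i.
have B0 : 0 <= B by apply: le_trans (HB 0); apply: gap_ge0.
have [j [-> | ->]] := int_even_or_odd i.
  have [-> ->] := ss' j; have := weights j; have := HB j; have := gap_ge0 j.
  move=> ? ? ?; have : 0 <= (1 - b j + a j) * (s (j + 1) - s j) by apply: mulr_ge0; lra.
  lra.
have -> : 2 * j + 1 + 1 = 2 * (j + 1) by ring.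
have [_ ->] := ss' j; have [-> _] := ss' (j + 1).
have := weights j; have := weights (j + 1); have := HB j; have := HB (j + 1).
have := gap_ge0 j; have := gap_ge0 (j + 1) => ? ? ? ? ? ?.
have : 0 <= b j * (s (j + 1) - s j) by apply: mulr_ge0; lra.
have : 0 <= (1 - a (j + 1)) * (s (j + 1 + 1) - s (j + 1)) by apply: mulr_ge0; lra.
lra.
Qed.

Let refine_cover x : exists i, s' i <= x <= s' (i + 1).
Proof.
have [i /andP [h1 h2]] := knot_cover s_knots x.
have := weights i; have := weights (i - 1); have := weights (i + 1).
have [e0 e1] := ss' i; have [_ e2] := ss' (i - 1); have [e3 _] := ss' (i + 1).
rewrite subrK in e2.
have := gap_ge0 i; have := gap_ge0 (i - 1); have := gap_ge0 (i + 1); rewrite subrK.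
move=> ? ? ? ? ? ?.
have : 0 <= (1 - b (i - 1)) * (s i - s (i - 1)) by apply: mulr_ge0; lra.
have : 0 <= a (i + 1) * (s (i + 1 + 1) - s (i + 1)) by apply: mulr_ge0; lra.
have : 0 <= (1 - b i) * (s (i + 1) - s i) by apply: mulr_ge0; lra.
have : 0 <= (b i - a i) * (s (i + 1) - s i) by apply: mulr_ge0; lra.
move=> ? ? ? ?.
case: (lerP x (s' (2 * i))) => c1.
  exists (2 * (i - 1) + 1); have -> : 2 * (i - 1) + 1 + 1 = 2 * i by ring.
  by rewrite c1 e2 andbT; lra.
case: (lerP x (s' (2 * i + 1))) => c2; first by exists (2 * i); rewrite c2 andbT ltW.
exists (2 * i + 1); have -> : 2 * i + 1 + 1 = 2 * (i + 1) by ring.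
by rewrite (ltW c2) /= e3; lra.
Qed.

Lemma refine_knot_seq : knot_seq s'.
Proof. by split; [apply: refine_lt | apply: refine_cover]. Qed.

End Refinement.

Lemma refinements_knot_seq (R : realType) (a b s : nat -> int -> R) :
  (forall k, inW (a k) (b k)) -> (forall i, s 0%N i = i%:~R) ->
  (forall k, refine_step (a k) (b k) (s k) (s k.+1)) ->
  forall k, knot_seq (s k) /\ gaps_bounded (s k).
Proof.
move=> W s0 refine; elim=> [|k [knots gaps]].
  by rewrite (funext s0); split; [apply: int_knot_seq | apply: int_gaps_bounded].
split; first exact: refine_knot_seq (W k) (refine k) knots.
exact: refine_gaps_bounded (W k) (refine k) knots gaps.
Qed.

Section MixedDifference.

Variables (R : realType) (m : nat).
Implicit Types (F N : R -> R -> 'rV[R]_m) (s t : int -> R).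

Definition mixed_diff F (x1 x2 y1 y2 : R) : 'rV[R]_m :=
  F x1 y1 + F x2 y2 - F x2 y1 - F x1 y2.

(* The multiplicative form of BMSDD, which is also meaningful for coinciding
   points. *)
Definition mixed_lipschitz F (M : R) : Prop :=
  forall x1 x2 y1 y2, `|mixed_diff F x1 x2 y1 y2| <= M * `|x1 - x2| * `|y1 - y2|.

Definition grid_mixed_lipschitz s t N (M : R) : Prop :=
  forall x1 x2 y1 y2,
    on_grid s t x1 y1 -> on_grid s t x1 y2 -> on_grid s t x2 y1 -> on_grid s t x2 y2 ->
    `|mixed_diff N x1 x2 y1 y2| <= M * `|x1 - x2| * `|y1 - y2|.

Lemma mixed_diff_splitx F x1 x2 x3 y1 y2 :
  mixed_diff F x1 x3 y1 y2 = mixed_diff F x1 x2 y1 y2 + mixed_diff F x2 x3 y1 y2.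
Proof. by apply/rowP => c; rewrite !mxE; ring. Qed.

Lemma mixed_diffNx F x1 x2 y1 y2 : mixed_diff F x2 x1 y1 y2 = - mixed_diff F x1 x2 y1 y2.
Proof. by apply/rowP => c; rewrite !mxE; ring. Qed.

Lemma mixed_diff_transpose F x1 x2 y1 y2 :
  mixed_diff (fun y x => F x y) y1 y2 x1 x2 = mixed_diff F x1 x2 y1 y2.
Proof. by apply/rowP => c; rewrite !mxE; ring. Qed.

Lemma mixed_lipschitz_ge0 F M : mixed_lipschitz F M -> 0 <= M.
Proof.
move=> /(_ 0 1 0 1); rewrite sub0r normrN normr1 !mulr1.
exact: le_trans (normr_ge0 _).
Qed.

Lemma BMSDD_grid_mixed_lipschitz s t N L : BMSDD s t N L -> grid_mixed_lipschitz s t N L.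
Proof.
move=> bmsdd x1 x2 y1 y2 g11 g12 g21 g22.
have [-> | nx] := eqVneq x1 x2.
  by rewrite subrr normr0 mulr0 mul0r normr_le0; apply/eqP/rowP => c; rewrite !mxE; ring.
have [-> | ny] := eqVneq y1 y2.
  by rewrite subrr normr0 mulr0 normr_le0; apply/eqP/rowP => c; rewrite !mxE; ring.
have := bmsdd x1 x2 y1 y2 nx ny g11 g12 g21 g22.
rewrite /divdiff normrZ normfV normrM mulrC ler_pdivrMr ?mulrA //.
by rewrite mulr_gt0 // normr_gt0 subr_eq0.
Qed.

Lemma mixed_diff_glue s F y1 y2 (c : R) : knot_seq s ->
  (forall i x1 x2, s i <= x1 <= s (i + 1) -> s i <= x2 <= s (i + 1) ->
    `|mixed_diff F x1 x2 y1 y2| <= `|x1 - x2| * c) ->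
  forall x1 x2, `|mixed_diff F x1 x2 y1 y2| <= `|x1 - x2| * c.
Proof.
case=> s_lt cover; apply: knot_span_ind => // [x1 x2 x3 le12 le23 b12 b23 | x1 x2].
  have -> : `|x1 - x3| = `|x1 - x2| + `|x2 - x3|.
    by rewrite !ler0_norm ?subr_le0 ?(le_trans le12 le23) //; ring.
  rewrite (mixed_diff_splitx _ _ x2) mulrDl; apply: le_trans (ler_normD _ _) _; exact: lerD.
by rewrite mixed_diffNx normrN (distrC x2).
Qed.

Lemma grid_mixed_lipschitz_restrict s t N F M :
  mixed_lipschitz F M -> (forall x y, on_grid s t x y -> N x y = F x y) ->
  grid_mixed_lipschitz s t N M.
Proof.
move=> FM NF x1 x2 y1 y2 g11 g12 g21 g22.
by rewrite /mixed_diff !NF //; apply: FM.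
Qed.

End MixedDifference.

Lemma normrZ_div_le (R : realType) (m : nat) (v : 'rV[R]_m) (a h c : R) :
  0 < h -> `|v| <= h * c -> `|(a / h) *: v| <= `|a| * c.
Proof.
move=> h_gt0 le_v; rewrite normrZ normrM normfV (gtr0_norm h_gt0) -mulrA ler_wpM2l //.
by rewrite mulrC ler_pdivrMr // mulrC.
Qed.

Lemma lerp_dist_sum_le (R : realFieldType) (a b x : R) : a < b ->
  (b - x) / (b - a) * (x - a) + (x - a) / (b - a) * (b - x) <= (b - a) / 2.
Proof.
move=> lt_ab; rewrite -subr_ge0.
have -> : (b - a) / 2 - ((b - x) / (b - a) * (x - a) + (x - a) / (b - a) * (b - x))
    = (a + b - 2 * x) ^+ 2 / (2 * (b - a)).
  by field; rewrite subr_eq0 gt_eqF.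
by rewrite divr_ge0 ?sqr_ge0 // mulr_ge0 // subr_ge0 ltW.
Qed.

Lemma lerp_norm_le (R : realType) (m : nat) (v0 v1 : 'rV[R]_m) (a b x C : R) :
  a < b -> a <= x <= b -> 0 <= C -> `|v0| <= C * (x - a) -> `|v1| <= C * (b - x) ->
  `|((b - x) / (b - a)) *: v0 + ((x - a) / (b - a)) *: v1| <= C * ((b - a) / 2).
Proof.
move=> lt_ab /andP [ax xb] C0 le_v0 le_v1.
have w_ge0 c : 0 <= c -> 0 <= c / (b - a) by move=> c0; rewrite divr_ge0 // subr_ge0 ltW.
have w0 : 0 <= (b - x) / (b - a) by apply: w_ge0; rewrite subr_ge0.
have w1 : 0 <= (x - a) / (b - a) by apply: w_ge0; rewrite subr_ge0.
apply: le_trans (ler_normD _ _) _; rewrite !normrZ -!normrM (ger0_norm w0) (ger0_norm w1).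
apply: le_trans (lerD (ler_wpM2l w0 le_v0) (ler_wpM2l w1 le_v1)) _.
by rewrite mulrCA [X in _ + X]mulrCA -mulrDr ler_wpM2l // lerp_dist_sum_le.
Qed.

Definition cell_index (R : realType) (s : int -> R) (x : R) : int :=
  xget 0 [set i | s i <= x <= s (i + 1)].

Section CoonsPatch.

Variables (R : realType) (m : nat) (s t : int -> R).
Hypotheses (s_knots : knot_seq s) (t_knots : knot_seq t).
Implicit Types (F N : R -> R -> 'rV[R]_m).

Let s_gap_neq0 := knot_gap_neq0 (knot_lt s_knots).
Let t_gap_neq0 := knot_gap_neq0 (knot_lt t_knots).

Lemma coons_cell_left N i j y : coons_cell s t N i j (s i) y = N (s i) y.
Proof. by apply/rowP => c; rewrite !mxE; field; rewrite s_gap_neq0 t_gap_neq0. Qed.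

Lemma coons_cell_right N i j y : coons_cell s t N i j (s (i + 1)) y = N (s (i + 1)) y.
Proof. by apply/rowP => c; rewrite !mxE; field; rewrite s_gap_neq0 t_gap_neq0. Qed.

Lemma coons_cell_bottom N i j x : coons_cell s t N i j x (t j) = N x (t j).
Proof. by apply/rowP => c; rewrite !mxE; field; rewrite s_gap_neq0 t_gap_neq0. Qed.

Lemma coons_cell_top N i j x : coons_cell s t N i j x (t (j + 1)) = N x (t (j + 1)).
Proof. by apply/rowP => c; rewrite !mxE; field; rewrite s_gap_neq0 t_gap_neq0. Qed.

Lemma coons_cell_ext N N' i j x y :
  (forall p y, N (s p) y = N' (s p) y) -> (forall x q, N x (t q) = N' x (t q)) ->
  coons_cell s t N i j x y = coons_cell s t N' i j x y.
Proof. by move=> eq_s eq_t; rewrite /coons_cell !eq_s !eq_t. Qed.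

Lemma coons_cell_unique N i j i' j' x y :
  in_cell s t i j x y -> in_cell s t i' j' x y ->
  coons_cell s t N i j x y = coons_cell s t N i' j' x y.
Proof.
move=> [hx hy] [hx' hy'].
have -> : coons_cell s t N i j x y = coons_cell s t N i' j x y.
  case: (knot_span_unique (knot_lt s_knots) hx hx') => [<- // | [-> ->] | [-> ->]].
  - by rewrite coons_cell_right coons_cell_left.
  - by rewrite coons_cell_left coons_cell_right.
case: (knot_span_unique (knot_lt t_knots) hy hy') => [<- // | [-> ->] | [-> ->]].
- by rewrite coons_cell_top coons_cell_bottom.
- by rewrite coons_cell_bottom coons_cell_top.
Qed.

Definition coons N x y : 'rV[R]_m :=
  coons_cell s t N (cell_index s x) (cell_index t y) x y.

Lemma in_cell_index x y : in_cell s t (cell_index s x) (cell_index t y) x y.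
Proof.
by split; [exact: (xgetPex 0 (knot_cover s_knots x)) | exact: (xgetPex 0 (knot_cover t_knots y))].
Qed.

Lemma coons_cellE N i j x y : in_cell s t i j x y -> coons_cell s t N i j x y = coons N x y.
Proof. by move=> cell; apply: coons_cell_unique cell (in_cell_index x y). Qed.

Lemma mixed_diff_coons_cell N i j x1 x2 y1 y2 :
  let hs := s (i + 1) - s i in let ht := t (j + 1) - t j in
  mixed_diff (coons_cell s t N i j) x1 x2 y1 y2 =
    ((x2 - x1) / hs) *: mixed_diff N (s i) (s (i + 1)) y1 y2
  + ((y2 - y1) / ht) *: mixed_diff N x1 x2 (t j) (t (j + 1))
  - ((x2 - x1) / hs) *: (((y2 - y1) / ht) *: mixed_diff N (s i) (s (i + 1)) (t j) (t (j + 1))).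
Proof. by apply/rowP => c; rewrite !mxE; field; rewrite s_gap_neq0 t_gap_neq0. Qed.

Lemma coons_cell_mixed_lipschitz N M i j :
  grid_mixed_lipschitz s t N M -> mixed_lipschitz (coons_cell s t N i j) (3 * M).
Proof.
move=> NM x1 x2 y1 y2; rewrite mixed_diff_coons_cell /=.
have hs_gt0 : 0 < s (i + 1) - s i by rewrite subr_gt0 (knot_lt s_knots).
have ht_gt0 : 0 < t (j + 1) - t j by rewrite subr_gt0 (knot_lt t_knots).
have Ds y1' y2' : `|mixed_diff N (s i) (s (i + 1)) y1' y2'|
    <= (s (i + 1) - s i) * (M * `|y1' - y2'|).
  rewrite mulrA (mulrC _ M) -(gtr0_norm hs_gt0) (distrC (s (i + 1))).
  by apply: NM; left; eexists.
have Dt x1' x2' : `|mixed_diff N x1' x2' (t j) (t (j + 1))|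
    <= (t (j + 1) - t j) * (M * `|x1' - x2'|).
  rewrite mulrA (mulrC _ M) -(gtr0_norm ht_gt0) (distrC (t (j + 1))) mulrAC.
  by apply: NM; right; eexists.
have DC := normrZ_div_le (y2 - y1) ht_gt0 (Dt (s i) (s (i + 1))).
rewrite (distrC (s i)) (gtr0_norm hs_gt0) [_ * (M * _)]mulrC -mulrA mulrCA in DC.
have := normrZ_div_le (x2 - x1) hs_gt0 DC.
have := normrZ_div_le (y2 - y1) ht_gt0 (Dt x1 x2).
have := normrZ_div_le (x2 - x1) hs_gt0 (Ds y1 y2).
rewrite (distrC x2) (distrC y2) => tA tB tC.
have -> : 3 * M * `|x1 - x2| * `|y1 - y2| =
  `|x1 - x2| * (M * `|y1 - y2|) + `|y1 - y2| * (M * `|x1 - x2|) + `|x1 - x2| * (M * `|y1 - y2|).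
  by ring.
by apply: le_trans (ler_normB _ _) _; rewrite !lerD // (le_trans (ler_normD _ _)) ?lerD.
Qed.

Lemma coons_mixed_lipschitz N M :
  grid_mixed_lipschitz s t N M -> mixed_lipschitz (coons N) (3 * M).
Proof.
move=> NM x1 x2 y1 y2; rewrite -mixed_diff_transpose mulrC.
apply: (mixed_diff_glue t_knots) => {y1 y2} j y1 y2 hy1 hy2.
rewrite mixed_diff_transpose.
have -> : `|y1 - y2| * (3 * M * `|x1 - x2|) = `|x1 - x2| * (3 * M * `|y1 - y2|) by ring.
apply: (mixed_diff_glue s_knots) => {x1 x2} i x1 x2 hx1 hx2.
have E x y : s i <= x <= s (i + 1) -> t j <= y <= t (j + 1) ->
    coons N x y = coons_cell s t N i j x y.
  by move=> hx hy; rewrite coons_cellE.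
rewrite /mixed_diff !E // -/(mixed_diff _ _ _ _ _) mulrCA mulrA.
exact: coons_cell_mixed_lipschitz.
Qed.

Lemma coons_cell_sub F i j x y :
  let hs := s (i + 1) - s i in let ht := t (j + 1) - t j in
  coons_cell s t F i j x y - F x y = - (
    ((s (i + 1) - x) / hs) *:
      (((t (j + 1) - y) / ht) *: mixed_diff F x (s i) y (t j)
       + ((y - t j) / ht) *: mixed_diff F x (s i) y (t (j + 1)))
  + ((x - s i) / hs) *:
      (((t (j + 1) - y) / ht) *: mixed_diff F x (s (i + 1)) y (t j)
       + ((y - t j) / ht) *: mixed_diff F x (s (i + 1)) y (t (j + 1)))).
Proof. by apply/rowP => c; rewrite !mxE; field; rewrite s_gap_neq0 t_gap_neq0. Qed.

Lemma coons_cell_error_le F K i j x y :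
  mixed_lipschitz F K -> in_cell s t i j x y ->
  `|coons_cell s t F i j x y - F x y|
    <= K * ((s (i + 1) - s i) / 2) * ((t (j + 1) - t j) / 2).
Proof.
move=> FK [hx hy]; have K0 := mixed_lipschitz_ge0 FK.
have [/andP [xl xr] /andP [yb yt]] := (hx, hy).
have nxl : `|x - s i| = x - s i by rewrite ger0_norm // subr_ge0.
have nxr : `|x - s (i + 1)| = s (i + 1) - x by rewrite distrC ger0_norm // subr_ge0.
have nyb : `|y - t j| = y - t j by rewrite ger0_norm // subr_ge0.
have nyt : `|y - t (j + 1)| = t (j + 1) - y by rewrite distrC ger0_norm // subr_ge0.
have [s_lt t_lt] := (knot_lt s_knots i, knot_lt t_knots j).
rewrite coons_cell_sub normrN mulrAC.
apply: lerp_norm_le => //; first by rewrite mulr_ge0 // divr_ge0 // subr_ge0 ltW.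
- rewrite mulrAC; apply: lerp_norm_le => //; first by rewrite mulr_ge0 // subr_ge0.
  + by rewrite -nxl -nyb FK.
  + by rewrite -nxl -nyt FK.
- rewrite mulrAC; apply: lerp_norm_le => //; first by rewrite mulr_ge0 // subr_ge0.
  + by rewrite -nxr -nyb FK.
  + by rewrite -nxr -nyt FK.
Qed.

Lemma coons_cell_error_le_mesh F K i j x y :
  gaps_bounded s -> gaps_bounded t -> mixed_lipschitz F K -> in_cell s t i j x y ->
  `|coons_cell s t F i j x y - F x y| <= K * (mesh s * mesh t / 4).
Proof.
move=> s_gaps t_gaps FK cell; apply: le_trans (coons_cell_error_le FK cell) _.
have K0 := mixed_lipschitz_ge0 FK.
have hs_ge0 : 0 <= s (i + 1) - s i by rewrite subr_ge0 ltW // (knot_lt s_knots).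
have ht_ge0 : 0 <= t (j + 1) - t j by rewrite subr_ge0 ltW // (knot_lt t_knots).
have -> : K * (mesh s * mesh t / 4) = K * (mesh s / 2) * (mesh t / 2) by field.
rewrite ler_pM ?mulr_ge0 ?divr_ge0 ?ler_wpM2l ?ler_pM2r ?invr_gt0 //; exact: mesh_ge.
Qed.

End CoonsPatch.

Unset Implicit Arguments.

Theorem theorem4 (R : realType) (m : nat) (L : R)
  (as_ bs at_ bt : nat -> int -> R)
  (s t : nat -> int -> R) (N : nat -> R -> R -> 'rV[R]_m) :
  (forall k, inW (as_ k) (bs k)) ->
  (forall k, inW (at_ k) (bt k)) ->
  (forall i : int, s 0%N i = i%:~R) ->
  (forall j : int, t 0%N j = j%:~R) ->
  C0_net (s 0%N) (t 0%N) (N 0%N) ->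
  BMSDD (s 0%N) (t 0%N) (N 0%N) L ->
  (forall k, refine_step (as_ k) (bs k) (s k) (s k.+1)) ->
  (forall k, refine_step (at_ k) (bt k) (t k) (t k.+1)) ->
  (forall k (x y : R) (i j : int),
      on_grid (s k.+1) (t k.+1) x y -> in_cell (s k) (t k) i j x y ->
      N k.+1 x y = coons_cell (s k) (t k) (N k) i j x y) ->
  forall k (x y : R) (i j i' j' : int),
    in_cell (s k.+1) (t k.+1) i' j' x y -> in_cell (s k) (t k) i j x y ->
    `|coons_cell (s k.+1) (t k.+1) (N k.+1) i' j' x y
      - coons_cell (s k) (t k) (N k) i j x y|
    <= 3 ^+ k.+1 * L * (mesh (s k.+1) * mesh (t k.+1) / 4).
Proof.
move=> W_s W_t s0 t0 _ bmsdd refine_s refine_t N_next.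
have s_knots k := (refinements_knot_seq W_s s0 refine_s k).1.
have t_knots k := (refinements_knot_seq W_t t0 refine_t k).1.
have s_gaps k := (refinements_knot_seq W_s s0 refine_s k).2.
have t_gaps k := (refinements_knot_seq W_t t0 refine_t k).2.
have N_coons k x y : on_grid (s k.+1) (t k.+1) x y ->
    N k.+1 x y = coons (s k) (t k) (N k) x y.
  by move=> grid; apply: N_next grid (in_cell_index (s_knots k) (t_knots k) x y).
have N_lip k : grid_mixed_lipschitz (s k) (t k) (N k) (3 ^+ k * L).
  elim: k => [|k IH]; first by rewrite expr0 mul1r; apply: BMSDD_grid_mixed_lipschitz.
  rewrite exprS -mulrA; apply: grid_mixed_lipschitz_restrict (N_coons k).
  exact: coons_mixed_lipschitz.
move=> k x y i j i' j' cell' cell.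
rewrite (coons_cellE (s_knots k) (t_knots k) _ cell).
rewrite (coons_cell_ext (N' := coons (s k) (t k) (N k))).
- apply: coons_cell_error_le_mesh cell' => //; rewrite exprS -mulrA.
  exact: coons_mixed_lipschitz.
- by move=> p y'; apply: N_coons; left; exists p.
- by move=> x' q; apply: N_coons; right; exists q.
Qed.
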